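(* Let the alphabet be countable, $\mathcal S$ the set of sentences, $\widehat{\mathcal I}$ the set of separating interpretations, and $\mu^*:\widehat{\mathcal B}\to\mathbb R$ a (countably additive) probability measure on the Borel $\sigma$-algebra $\widehat{\mathcal B}$ on $\widehat{\mathcal I}$. Define $\mu:\mathcal S\to\mathbb R$ by $\mu(\varphi)=\mu^*(\widehat{\mathrm{Mod}}(\varphi))$. Then $\mu$ is a Gaifman probability on sentences.
   Context: Setting: higher-order logic (Church's simple theory of types, without a description operator), with Henkin semantics: an interpretation $I$ consists of domains $D_\alpha$ ($D_o=\{\mathsf T,\mathsf F\}$, $D_{\alpha\to\beta}$ a set of functions) and a valuation of constants (equality denoting identity) such that every term has a denotation; $V(t,I)$ is the denotation of a closed term $t$. An alphabet is countable if its set of constants is countable. Sentences are closed terms of type $o$; a sentence is valid if true in every interpretation. $I$ is separating if for every pair $r,s$ of closed terms of the same function type $\alpha\to\beta$ with $V(r,I)\neq V(s,I)$ there is a closed term $t$ of type $\alpha$ (over the alphabet) with $V((r\,t),I)\neq V((s\,t),I)$. $\widehat{\mathrm{Mod}}(\varphi)=\{I\in\widehat{\mathcal I}:\varphi\text{ is valid in }I\}$; these sets form a basis of a topology on $\widehat{\mathcal I}$ and $\widehat{\mathcal B}$ is its Borel $\sigma$-algebra (for countable alphabet, the $\sigma$-algebra generated by the sets $\widehat{\mathrm{Mod}}(\varphi)$). A probability on sentences is a non-negative $\mu:\mathcal S\to\mathbb R$ with $\mu(\varphi)=1$ for valid $\varphi$ and $\mu(\varphi\vee\psi)=\mu(\varphi)+\mu(\psi)$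 whenever $\neg(\varphi\wedge\psi)$ is valid. $\mu$ is Gaifman if for every pair $r,s$ of closed terms of the same function type $\alpha\to\beta$, $\mu(r=s)=\inf_{\{t_1,\dots,t_n\}}\mu(\bigwedge_{i=1}^n((r\,t_i)=(s\,t_i)))$ over all finite sets of closed terms of type $\alpha$. *)

From HB Require Import structures.
From mathcomp Require Import all_boot all_order all_algebra.
From mathcomp Require Import boolp classical_sets reals topology normedtype sequences.
Set Implicit Arguments. Unset Strict Implicit. Unset Printing Implicit Defensive.
Import Order.TTheory GRing.Theory Num.Theory.
Import numFieldNormedType.Exports.
Local Open Scope classical_set_scope.
Local Open Scope ring_scope.

Inductive ty (B : Type) : Type :=
| TO : ty B
| TBase : B -> ty B
| TArr : ty B -> ty B -> ty B.
Arguments TO {B}.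

Record alphabet := Alphabet {
  base : Type;
  const : Type;
  ctype : const -> ty base
}.

Notation tyA A := (ty (base A)).

Inductive var (B : Type) : seq (ty B) -> ty B -> Type :=
| VZ (G : seq (ty B)) (a : ty B) : var (a :: G) a
| VS (G : seq (ty B)) (a b : ty B) : var G a -> var (b :: G) a.

Unset Implicit Arguments.
(* Intrinsically typed terms.  Equality (at every type) and the logical
   connectives/quantifier are logical constants with fixed meaning. *)
Inductive term (A : alphabet) (G : seq (tyA A)) : tyA A -> Type :=
| TVar (a : tyA A) : var G a -> term A G a
| TConst (c : const A) : term A G (ctype c)
| TApp (a b : tyA A) : term A G (TArr a b) -> term A G a -> term A G b
| TLam (a b : tyA A) : term A (a :: G) b -> term A G (TArr a b)
| TEq (a : tyA A) : term A G a -> term A G a -> term A G TO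
| TTrue : term A G TO
| TNot : term A G TO -> term A G TO
| TAnd : term A G TO -> term A G TO -> term A G TO
| TOr : term A G TO -> term A G TO -> term A G TO
| TForall (a : tyA A) : term A (a :: G) TO -> term A G TO.
Set Implicit Arguments.
Arguments TVar {A G a}.
Arguments TConst {A} G c.
Arguments TApp {A G a b}.
Arguments TLam {A G a b}.
Arguments TEq {A G a}.
Arguments TTrue {A G}.
Arguments TNot {A G}.
Arguments TAnd {A G}.
Arguments TOr {A G}.
Arguments TForall {A G a}.

Definition closed (A : alphabet) (a : tyA A) := term A [::] a.
Arguments closed : clear implicits.
Definition sentence (A : alphabet) := closed A TO.

Fixpoint bigAnd (A : alphabet) (G : seq (tyA A)) (s : seq (term A G TO)) : term A G TO :=
  match s with
  | [::] => TTrue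
  | [:: x] => x
  | x :: s' => TAnd x (bigAnd s')
  end.

Fixpoint envT (B : Type) (D : ty B -> Type) (G : seq (ty B)) : Type :=
  match G with
  | [::] => unit
  | a :: G' => (D a * envT D G')%type
  end.

Fixpoint lookup (B : Type) (D : ty B -> Type) (G : seq (ty B)) (a : ty B)
  (v : var G a) : envT D G -> D a :=
  match v in var G' a' return envT D G' -> D a' with
  | VZ _ _ => fun r => r.1
  | VS _ _ _ v' => fun r => lookup v' r.2
  end.

(* A Henkin interpretation: domains D_alpha, with D_o a two-element set
   (identified with bool via the bijection [tv]), D_(a->b) a set of functions
   from D_a to D_b (application [app], extensional), nonempty base domains,
   values of constants, and a denotation for every term (w.r.t. every
   assignment of the free variables) satisfying the usual equations. *)
Record interp (A : alphabet) := Interp {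
  dom : tyA A -> Type;
  tv : dom TO -> bool;
  tv_bij : bijective tv;
  app : forall a b, dom (TArr a b) -> dom a -> dom b;
  app_ext : forall a b (f g : dom (TArr a b)), (forall x, app f x = app g x) -> f = g;
  base_inh : forall i : base A, inhabited (dom (TBase i));
  cval : forall c : const A, dom (ctype c);
  den : forall G a, term A G a -> envT dom G -> dom a;
  den_var : forall G a (v : var G a) r, den (TVar v) r = lookup v r;
  den_const : forall G c r, den (TConst G c) r = cval c;
  den_app : forall G a b (t : term A G (TArr a b)) (u : term A G a) r,
      den (TApp t u) r = app (den t r) (den u r);
  den_lam : forall G a b (t : term A (a :: G) b) r (d : dom a),
      app (den (TLam t) r) d = den t (d, r);
  den_eq : forall G a (t u : term A G a) r,
      tv (den (TEq t u) r) = true <-> den t r = den u r;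
  den_true : forall (G : seq (tyA A)) r, tv (den (@TTrue A G) r) = true;
  den_not : forall G (t : term A G TO) r, tv (den (TNot t) r) = ~~ tv (den t r);
  den_and : forall G (t u : term A G TO) r,
      tv (den (TAnd t u) r) = tv (den t r) && tv (den u r);
  den_or : forall G (t u : term A G TO) r,
      tv (den (TOr t u) r) = tv (den t r) || tv (den u r);
  den_forall : forall G a (t : term A (a :: G) TO) r,
      tv (den (TForall t) r) = true <-> forall d : dom a, tv (den t (d, r)) = true
}.

Arguments dom {A} _ _.
Arguments tv {A} _ _.
Arguments app {A} _ {a b}.
Arguments cval {A} _ c.
Arguments den {A} _ {G a}.

Definition V (A : alphabet) (I : interp A) (a : tyA A) (t : closed A a) : dom I a :=
  den I t tt.

Definition valid_in (A : alphabet) (I : interp A) (phi : sentence A) : Prop :=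
  tv I (V I phi) = true.

Definition valid (A : alphabet) (phi : sentence A) : Prop :=
  forall I : interp A, valid_in I phi.

Definition separating (A : alphabet) (I : interp A) : Prop :=
  forall (a b : tyA A) (r s : closed A (TArr a b)),
    V I r <> V I s -> exists t : closed A a, V I (TApp r t) <> V I (TApp s t).

Definition countable_alphabet (A : alphabet) : Prop :=
  exists f : const A -> nat, injective f.

Definition Ihat (A : alphabet) := {I : interp A | separating I}.

Definition Mod (A : alphabet) (phi : sentence A) : set (Ihat A) :=
  [set I | valid_in (proj1_sig I) phi].

Arguments Ihat : clear implicits.

Definition is_sigma_algebra (T : Type) (S : set (set T)) : Prop :=
  [/\ S setT,
      (forall X, S X -> S (~` X)) &
      (forall F : nat -> set T, (forall n, S (F n)) -> S (\bigcup_n F n))].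

Definition gen_sigma (T : Type) (G : set (set T)) : set (set T) :=
  fun X => forall S, is_sigma_algebra S -> G `<=` S -> S X.

(* Borel sigma-algebra on \hat I (countable alphabet): generated by the Mod sets *)
Definition Bhat (A : alphabet) : set (set (Ihat A)) :=
  gen_sigma [set Mod phi | phi in [set: sentence A]].

Arguments Bhat : clear implicits.

Definition prob_measure (R : realType) (T : Type) (M : set (set T)) (m : set T -> R) : Prop :=
  [/\ forall X, M X -> 0 <= m X,
      m setT = 1 &
      forall F : nat -> set T, (forall n, M (F n)) ->
        (forall i j, i <> j -> F i `&` F j = set0) ->
        (fun n => \sum_(i < n) m (F i)) @ \oo --> m (\bigcup_n F n)].

Definition prob_sent (R : realType) (A : alphabet) (mu : sentence A -> R) : Prop :=
  [/\ forall phi, 0 <= mu phi,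
      forall phi, valid phi -> mu phi = 1 &
      forall phi psi, valid (TNot (TAnd phi psi)) -> mu (TOr phi psi) = mu phi + mu psi].

Definition gaifman (R : realType) (A : alphabet) (mu : sentence A -> R) : Prop :=
  prob_sent mu /\
  forall (a b : tyA A) (r s : closed A (TArr a b)),
    mu (TEq r s) =
    inf [set mu (bigAnd [seq TEq (TApp r t) (TApp s t) | t <- ts])
        | ts in [set: seq (closed A a)]].

(* Countable additivity of mu* gives finite additivity of mu, since Mod turns
   disjunction into union.  For the Gaifman condition, separation makes
   Mod (r = s) the intersection over all closed t of Mod (r t = s t); as the
   alphabet is countable there are countably many such t, so enumerating them
   yields a decreasing sequence of finite conjunctions whose models shrink to
   Mod (r = s).  Continuity of mu* from above then identifies mu (r = s) with the
   infimum over finite conjunctions, each of which is bounded below by it. *)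

From Pilot Require Import Defs.
From HB Require Import structures.
From mathcomp Require Import all_boot all_order all_algebra.
From mathcomp Require Import boolp classical_sets reals topology normedtype sequences.
From Stdlib Require Import Program.Equality Eqdep.
From Stdlib Require List.
Import Order.TTheory GRing.Theory Num.Theory.
Import numFieldNormedType.Exports.
Set Implicit Arguments. Unset Strict Implicit. Unset Printing Implicit Defensive.
Local Open Scope classical_set_scope.
Local Open Scope ring_scope.

Section TermEncoding.
Variables (A : alphabet) (code_base : base A -> nat) (code_const : const A -> nat).
Hypotheses (code_base_inj : injective code_base) (code_const_inj : injective code_const).

Fixpoint ty_tree (x : tyA A) : GenTree.tree nat :=
  match x with
  | TO => GenTree.Node 0 [::]
  | TBase i => GenTree.Node 1 [:: GenTree.Leaf (code_base i)]
  | TArr x y => GenTree.Node 2 [:: ty_tree x; ty_tree y]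
  end.

Lemma ty_tree_inj : injective ty_tree.
Proof.
elim=> [|i|x IHx y IHy] [|j|x' y'] //= [].
  by move=> /code_base_inj ->.
by move=> /IHx -> /IHy ->.
Qed.

Fixpoint var_index (G : seq (tyA A)) (a : tyA A) (v : var G a) : nat :=
  match v with
  | VZ _ _ => 0
  | VS _ _ _ v' => (var_index v').+1
  end.

Lemma var_index_inj G a : injective (@var_index G a).
Proof.
move=> v1; induction v1; intros v2; dependent destruction v2 => //=.
by case=> /IHv1 ->.
Qed.

Fixpoint term_tree (G : seq (tyA A)) (a : tyA A) (t : term A G a) : GenTree.tree nat :=
  match t with
  | TVar a v => GenTree.Node 0 [:: ty_tree a; GenTree.Leaf (var_index v)]
  | TConst c => GenTree.Node 1 [:: GenTree.Leaf (code_const c)]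
  | TApp a _ t u => GenTree.Node 2 [:: ty_tree a; term_tree t; term_tree u]
  | TLam a _ t => GenTree.Node 3 [:: ty_tree a; term_tree t]
  | TEq a t u => GenTree.Node 4 [:: ty_tree a; term_tree t; term_tree u]
  | TTrue => GenTree.Node 5 [::]
  | TNot t => GenTree.Node 6 [:: term_tree t]
  | TAnd t u => GenTree.Node 7 [:: term_tree t; term_tree u]
  | TOr t u => GenTree.Node 8 [:: term_tree t; term_tree u]
  | TForall a t => GenTree.Node 9 [:: ty_tree a; term_tree t]
  end.

(* Stated on the dependent pair so that the induction can vary the type index. *)
Lemma term_tree_inj_dep G a1 (t1 : term A G a1) a2 (t2 : term A G a2) :
  term_tree t1 = term_tree t2 -> existT (term A G) a1 t1 = existT _ a2 t2.
Proof.
revert a2 t2; induction t1; intros a2 t2; destruct t2 => //=.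
- by case=> /ty_tree_inj E; subst; move=> /var_index_inj ->.
- by case=> /code_const_inj ->.
- case=> /ty_tree_inj E /IHt1_1 E1 /IHt1_2 E2; subst.
  case: (congr1 (@projT1 _ _) E1) => E; subst.
  by apply inj_pair2 in E1, E2; subst.
- case=> /ty_tree_inj E; subst => /IHt1 E1.
  by have /= E := congr1 (@projT1 _ _) E1; subst; apply inj_pair2 in E1; subst.
- by case=> /ty_tree_inj E /IHt1_1 E1 /IHt1_2 E2; subst; apply inj_pair2 in E1, E2; subst.
- by case=> /IHt1 E1; apply inj_pair2 in E1; subst.
- by case=> /IHt1_1 E1 /IHt1_2 E2; apply inj_pair2 in E1, E2; subst.
- by case=> /IHt1_1 E1 /IHt1_2 E2; apply inj_pair2 in E1, E2; subst.
- by case=> /ty_tree_inj E; subst => /IHt1 E1; apply inj_pair2 in E1; subst.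
Qed.

Lemma term_countable G a : exists code : term A G a -> nat, injective code.
Proof.
exists (fun t => pickle (term_tree t)).
move=> t1 t2 /(pcan_inj pickleK_inv) E.
by apply: inj_pair2; exact: term_tree_inj_dep.
Qed.

End TermEncoding.

Section GeneratedSigmaAlgebra.
Variables (T : Type) (G : set (set T)).

Lemma gen_sigma_sigma_algebra : is_sigma_algebra (gen_sigma G).
Proof.
split=> [S []|X GX S sigmaS GS|F GF S sigmaS GS] //.
  by case: (sigmaS) => _ + _; apply; exact: GX.
by case: (sigmaS) => _ _; apply=> n; exact: GF.
Qed.

Lemma sub_gen_sigma : G `<=` gen_sigma G.
Proof. by move=> X GX S _; apply. Qed.

End GeneratedSigmaAlgebra.

Section SigmaAlgebra.
Variables (T : Type) (M : set (set T)).
Hypothesis sigmaM : is_sigma_algebra M.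

Lemma sigma_setT : M setT. Proof. by case: sigmaM. Qed.

Lemma sigma_setC X : M X -> M (~` X). Proof. by case: sigmaM => _ + _; apply. Qed.

Lemma sigma_bigcup (F : nat -> set T) : (forall n, M (F n)) -> M (\bigcup_n F n).
Proof. by case: sigmaM => _ _; apply. Qed.

Lemma sigma_set0 : M set0. Proof. by rewrite -setCT; exact/sigma_setC/sigma_setT. Qed.

Lemma sigma_setU X Y : M X -> M Y -> M (X `|` Y).
Proof.
by move=> MX MY; rewrite -bigcup2E; apply: sigma_bigcup => -[|[|n]] //=; exact: sigma_set0.
Qed.

Lemma sigma_setI X Y : M X -> M Y -> M (X `&` Y).
Proof.
move=> MX MY; rewrite -[_ `&` _]setCK setCI.
by apply/sigma_setC/sigma_setU; exact: sigma_setC.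
Qed.

Lemma sigma_setD X Y : M X -> M Y -> M (X `\` Y).
Proof. by move=> MX /sigma_setC; exact: sigma_setI. Qed.

Lemma sigma_bigcap (F : nat -> set T) : (forall n, M (F n)) -> M (\bigcap_n F n).
Proof.
move=> MF; rewrite -[X in M X]setCK setC_bigcap.
by apply/sigma_setC/sigma_bigcup => n; exact: sigma_setC.
Qed.

Lemma sigma_bigcap_In (X : Type) (E : X -> set T) (ts : seq X) :
  (forall t, M (E t)) -> M (\bigcap_(t in [set t | List.In t ts]) E t).
Proof.
move=> ME; elim: ts => [|t ts IH].
  have -> : [set t | List.In t (@nil X)] = set0 by apply/seteqP; split.
  by rewrite bigcap_set0; exact: sigma_setT.
have -> : [set u | List.In u (t :: ts)] = t |` [set u | List.In u ts].
  by apply/seteqP; split=> u /= [<-|?]; by [left|right].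
by rewrite bigcap_setU1; exact: sigma_setI.
Qed.

End SigmaAlgebra.

Lemma exists_seq_code_lt (X : Type) (code : X -> nat) : injective code ->
  forall n, exists ts : seq X, [set t | List.In t ts] = [set t | (code t < n)%N].
Proof.
move=> code_inj; elim=> [|n [ts tsE]].
  by exists [::]; apply/seteqP; split=> t /=; rewrite ?ltn0.
have tsP u : List.In u ts = (code u < n)%N := congr1 (fun A => A u) tsE.
have [[t tn]|no_t] := pselect (exists t, code t = n).
  exists (t :: ts); apply/seteqP; split=> u /=.
    by case=> [<-|]; [rewrite tn | rewrite tsP => /ltnW].
  rewrite ltnS leq_eqVlt => /orP[/eqP|]; first by rewrite -tn => /code_inj ->; left.
  by rewrite -tsP; right.
exists ts; apply/seteqP; split=> u /=; rewrite tsP; first exact: ltnW.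
rewrite ltnS leq_eqVlt => /orP[/eqP un|//]; by exfalso; apply: no_t; exists u.
Qed.

Section ProbabilityMeasure.
Variables (R : realType) (T : Type) (M : set (set T)) (m : set T -> R).
Hypotheses (sigmaM : is_sigma_algebra M) (mM : prob_measure M m).

Lemma measure_ge0 X : M X -> 0 <= m X. Proof. by case: mM => + _ _; apply. Qed.

Lemma measure_setT : m setT = 1. Proof. by case: mM. Qed.

Lemma measure_sigma_additive (F : nat -> set T) : (forall n, M (F n)) ->
  trivIset setT F -> \sum_(i < n) m (F i) @[n --> \oo] --> m (\bigcup_n F n).
Proof.
case: mM => _ _ + MF /trivIsetP disjF; apply => // i j /eqP ij; exact: disjF.
Qed.

Lemma measure0 : m set0 = 0.
Proof.
have disj0 : trivIset [set: nat] (fun=> @set0 T) by move=> i j _ _; rewrite setI0 => -[].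
have := measure_sigma_additive (fun=> sigma_set0 sigmaM) disj0.
rewrite bigcup0 // => cvS.
have cvSD : \sum_(i < n) m set0 + m set0 @[n --> \oo] --> m set0 + m set0.
  by apply: cvgD => //; exact: cvg_cst.
have cvSS : \sum_(i < n) m set0 + m set0 @[n --> \oo] --> m set0.
  rewrite -(cvg_shiftS (fun n => \sum_(i < n) m set0)) in cvS.
  by move: cvS; under eq_fun do rewrite big_ord_recr /=.
suff : m set0 + m set0 = m set0 by move/eqP; rewrite -subr_eq0 addrK => /eqP.
exact: (cvg_unique (@norm_hausdorff _ R^o)) cvSD cvSS.
Qed.

Lemma measureU X Y : M X -> M Y -> X `&` Y = set0 -> m (X `|` Y) = m X + m Y.
Proof.
move=> MX MY XY0.
have M2 n : M (bigcup2 X Y n) by case: n => [|[|n]] //=; exact: sigma_set0.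
have := measure_sigma_additive M2; rewrite -trivIset_bigcup2 bigcup2E => /(_ XY0).
rewrite -(cvg_shiftn 2) => cvU.
suff sum2 : (fun n => \sum_(i < n + 2) m (bigcup2 X Y i)) = fun=> m X + m Y.
  by rewrite sum2 in cvU; exact: (cvg_unique (@norm_hausdorff _ R^o)) cvU (cvg_cst _).
apply/funext => n; rewrite addn2 !big_ord_recl big1 ?addr0 ?addrA // => i _.
exact: measure0.
Qed.

Lemma measureD X Y : M X -> M Y -> Y `<=` X -> m (X `\` Y) = m X - m Y.
Proof.
move=> MX MY YX; rewrite -[in m X](setDUK YX) measureU ?setDIK //.
  by rewrite addrC addKr.
exact: sigma_setD.
Qed.

Lemma le_measure X Y : M X -> M Y -> X `<=` Y -> m X <= m Y.
Proof.
move=> MX MY XY; rewrite -(subr_ge0 (m X)) -measureD //.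
by apply: measure_ge0; exact: sigma_setD.
Qed.

Lemma nondecreasing_cvg_measure (F : nat -> set T) : (forall n, M (F n)) ->
  (forall n, F n `<=` F n.+1) -> m (F n) @[n --> \oo] --> m (\bigcup_n F n).
Proof.
move=> MF FS; have ndF : nondecreasing_seq F by apply/nondecreasing_seqP => n; exact/subsetPset.
have MD n : M (seqD F n) by case: n => [|n] //=; exact: sigma_setD.
have partial n : \sum_(i < n.+1) m (seqD F i) = m (F n).
  elim: n => [|n IH]; first by rewrite big_ord_recl big_ord0 addr0.
  by rewrite big_ord_recr /= IH -measureU ?setDIK -?setU_seqD //; exact: sigma_setD.
have := measure_sigma_additive MD (trivIset_seqD ndF).
by rewrite eq_bigcup_seqD -cvg_shiftS; under eq_fun do rewrite partial.
Qed.

Lemma nonincreasing_cvg_measure (F : nat -> set T) : (forall n, M (F n)) ->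
  (forall n, F n.+1 `<=` F n) -> m (F n) @[n --> \oo] --> m (\bigcap_n F n).
Proof.
move=> MF FS; have F0 n : F n `<=` F 0.
  by elim: n => // n IH; exact: subset_trans (FS n) IH.
have Mcap : M (\bigcap_n F n) by exact: sigma_bigcap.
have cap0 : \bigcap_n F n `<=` F 0 by move=> x; apply.
have MC n : M (F 0 `\` F n) by exact: sigma_setD.
have CS n : F 0 `\` F n `<=` F 0 `\` F n.+1 by exact: setDS.
have := nondecreasing_cvg_measure MC CS.
rewrite -setI_bigcupr -setC_bigcap -setDE (measureD (MF 0) Mcap cap0).
under eq_fun do rewrite (measureD (MF 0) (MF _) (F0 _)).
move=> cvC.
have : m (F 0) - (m (F 0) - m (F n)) @[n --> \oo] --> m (F 0) - (m (F 0) - m (\bigcap_n F n)).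
  by apply: cvgB => //; exact: cvg_cst.
by rewrite subKr; under eq_fun do rewrite subKr.
Qed.

Lemma measure_bigcap_inf (X : Type) (code : X -> nat) (E : X -> set T) :
  injective code -> (forall t, M (E t)) ->
  m (\bigcap_t E t) =
  inf [set m (\bigcap_(t in [set t | List.In t ts]) E t) | ts in [set: seq X]].
Proof.
move=> code_inj ME.
pose B n := \bigcap_(t in [set t | (code t < n)%N]) E t.
have MB n : M (B n).
  by have [ts tsE] := exists_seq_code_lt code_inj n; rewrite /B -tsE; exact: sigma_bigcap_In.
have BS n : B n.+1 `<=` B n by move=> x Bx t /ltnW; exact: Bx.
have capB : \bigcap_n B n = \bigcap_t E t.
  apply/seteqP; split=> [x Bx t _|x Ex n _ t _]; last exact: Ex.
  exact: (Bx (code t).+1 I t (ltnSn _)).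
have Mcap : M (\bigcap_t E t) by rewrite -capB; exact: sigma_bigcap.
have Mfin ts : M (\bigcap_(t in [set t | List.In t ts]) E t) by exact: sigma_bigcap_In.
apply/eqP; rewrite eq_le; apply/andP; split.
  apply: lb_le_inf; first by exists (m (\bigcap_(t in [set t | List.In t [::]]) E t)), [::].
  by move=> _ [ts _ <-]; apply: le_measure => // x Ex t _; exact: Ex.
have := nonincreasing_cvg_measure MB BS; rewrite capB => cvB.
apply: (cvgr_to_ge cvB); apply: nearW => n.
have [ts tsE] := exists_seq_code_lt code_inj n.
apply: ge_inf; last by exists ts => //; rewrite tsE.
by exists 0 => _ [ts' _ <-]; exact: measure_ge0.
Qed.

End ProbabilityMeasure.

Lemma List_In_map (X Y : Type) (f : X -> Y) (s : seq X) :
  [set y | List.In y (map f s)] = f @` [set x | List.In x s].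
Proof.
apply/seteqP; split=> y /=; first by case/List.in_map_iff => x [<- ?]; exists x.
by case=> x ? <-; exact: List.in_map.
Qed.

Section Models.
Variable A : alphabet.
Implicit Types phi psi : sentence A.

Lemma Mod_TOr phi psi : Mod (TOr phi psi) = Mod phi `|` Mod psi.
Proof.
apply/seteqP; split=> -[I ?]; rewrite /Mod /valid_in /V /= den_or.
  by case/orP; [left|right].
by case=> h; apply/orP; [left|right].
Qed.

Lemma Mod_valid phi : valid phi -> Mod phi = setT.
Proof. by move=> phi_valid; apply/seteqP; split=> // -[I ?] _; exact: phi_valid. Qed.

Lemma Mod_disjoint phi psi : valid (TNot (TAnd phi psi)) -> Mod phi `&` Mod psi = set0.
Proof.
move=> excl; apply/seteqP; split=> // -[I ?]; rewrite /Mod /valid_in /V /= => -[phiI psiI].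
by have := excl I; rewrite /valid_in /V /= den_not den_and phiI psiI.
Qed.

Lemma valid_in_bigAnd (I : interp A) (l : seq (sentence A)) :
  valid_in I (bigAnd l) <-> forall phi, List.In phi l -> valid_in I phi.
Proof.
elim: l => [|phi [|psi l] IH].
- by split=> // _; exact: den_true.
- by split=> [? _ [<-|[]]|]; last by apply; left.
- rewrite /valid_in /V /= den_and; rewrite /valid_in /V /= in IH.
  split=> [/andP[? /IH all_l] chi [<-|] //|all_l]; first exact: all_l.
  by apply/andP; split; [|apply/IH => chi ?]; apply: all_l; [left|right].
Qed.

Lemma Mod_bigAnd (l : seq (sentence A)) :
  Mod (bigAnd l) = \bigcap_(phi in [set phi | List.In phi l]) Mod phi.
Proof. by apply/seteqP; split=> I /valid_in_bigAnd. Qed.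


Lemma Mod_TEq_fun a b (r s : Defs.closed A (TArr a b)) :
  Mod (TEq r s) = \bigcap_t Mod (TEq (TApp r t) (TApp s t)).
Proof.
apply/seteqP; split=> -[I I_sep]; rewrite /Mod /valid_in /V /=.
  by move=> /den_eq rs t _; apply/den_eq; rewrite !den_app rs.
move=> rs_pointwise; apply/den_eq; apply: contrapT => /I_sep [t]; apply.
by apply/den_eq/rs_pointwise.
Qed.

Lemma Bhat_sigma_algebra : is_sigma_algebra (Bhat A).
Proof. exact: gen_sigma_sigma_algebra. Qed.

Lemma Bhat_Mod phi : Bhat A (Mod phi).
Proof. by apply: sub_gen_sigma; exists phi. Qed.

End Models.

Theorem mainTheorem12 (R : realType) (A : alphabet)
  (hcountC : countable_alphabet A)
  (hcountB : exists f : base A -> nat, injective f)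
  (mustar : set (Ihat A) -> R)
  (hmu : prob_measure (Bhat A) mustar) :
  gaifman (fun phi : sentence A => mustar (Mod phi)).
Proof.
have [code_const code_const_inj] := hcountC.
have [code_base code_base_inj] := hcountB.
have sigmaB := Bhat_sigma_algebra A.
split; first split.
- by move=> phi; exact: (measure_ge0 hmu (Bhat_Mod phi)).
- by move=> phi /Mod_valid ->; exact: (measure_setT hmu).
- move=> phi psi /Mod_disjoint disj; rewrite Mod_TOr.
  exact: (measureU sigmaB hmu (Bhat_Mod _) (Bhat_Mod _) disj).
move=> a b r s.
have [code code_inj] := term_countable code_base_inj code_const_inj [::] a.
rewrite Mod_TEq_fun (measure_bigcap_inf sigmaB hmu code_inj) => [|t]; last exact: Bhat_Mod.
congr inf; apply: eq_imagel => ts _ /=.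
by rewrite Mod_bigAnd List_In_map bigcap_image.
Qed.
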